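(* Let $f\in L^2(\mathbb{R},\Phi)$ be a convex function that is not identically zero. Then $f$ has Hermite rank at most $2$, i.e. at least one of $\int f h_0\,d\Phi$, $\int f h_1\,d\Phi$, $\int f h_2\,d\Phi$ is nonzero.
   Context: $\Phi$ denotes the standard normal distribution on $\mathbb{R}$ and $L^2(\mathbb{R},\Phi)=\{f:\int f^2\,d\Phi<\infty\}$. The Hermite polynomials are $h_m(x)=(-1)^m e^{x^2/2}\frac{d^m}{dx^m}e^{-x^2/2}$, $m=0,1,2,\dots$ (so $h_0=1$, $h_1(x)=x$, $h_2(x)=x^2-1$); they form an orthogonal basis of $L^2(\mathbb{R},\Phi)$, so every $f\in L^2(\mathbb{R},\Phi)$ has a unique expansion $f=\sum_{i\ge0}c_ih_i$. The Hermite rank of a nonzero $f$ is the smallest index $i$ with $c_i\neq 0$, equivalently with $\int f h_i\,d\Phi\ne 0$. *)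

From HB Require Import structures.
From mathcomp Require Import all_boot all_order all_algebra.
From mathcomp Require Import all_classical all_reals all_analysis.
Set Implicit Arguments. Unset Strict Implicit. Unset Printing Implicit Defensive.
Import Order.TTheory GRing.Theory Num.Theory.
Local Open Scope ring_scope.

Definition Phi (R : realType) := normal_prob (0 : R) 1.
Arguments Phi R : clear implicits.

Definition hermite (R : realType) (m : nat) (x : R) : R :=
  (-1) ^+ m * expR (x ^+ 2 / 2)
  * (iter m (@derive1 R R) (fun y : R => expR (- (y ^+ 2) / 2))) x.

Definition in_L2_Phi (R : realType) (f : R -> R) : Prop :=
  measurable_fun setT f /\
  (\int[Phi R]_x ((f x) ^+ 2)%:E < +oo)%E.

From HB Require Import structures.
From mathcomp Require Import all_boot all_order all_algebra.
From mathcomp Require Import all_classical all_reals all_analysis.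
From mathcomp Require Import measurable_realfun ring lra.
Import Order.TTheory GRing.Theory Num.Theory numFieldTopology.Exports.
Set Implicit Arguments. Unset Strict Implicit. Unset Printing Implicit Defensive.
Local Open Scope classical_set_scope.
Local Open Scope ring_scope.

(* For convex f the set {f < 0} is an interval and f >= 0 outside it,
   so a product q of two affine functions, nonpositive on that interval and
   nonnegative outside it, satisfies f q >= 0 (q = 1 if f >= 0).  Convex
   functions are continuous, so f q > 0 near some point and the Phi-integral
   of f q is positive.  But q = (a + c) h_0 + b h_1 + c h_2, so one of the
   integrals of f h_0, f h_1, f h_2 is nonzero; they all exist because
   x^4 has a finite Phi-moment and f is Phi-square-integrable. *)

Definition convexR (R : realFieldType) (f : R -> R) :=
  forall t x y, 0 <= t <= 1 -> f (t * x + (1 - t) * y) <= t * f x + (1 - t) * f y.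

Lemma convex_functionT_convexR (R : realFieldType) (f : R -> R) :
  convex_function [set: R^o] f -> convexR f.
Proof.
move=> cf t x y /andP[t0 t1].
by have := cf (Itv01 t0 t1) x y; rewrite !inE => /(_ I I).
Qed.

Section convexR.
Import numFieldNormedType.Exports.
Variables (R : realFieldType) (f : R -> R).
Hypothesis f_convex : convexR f.

Lemma convexR_opp : convexR (fun x => f (- x)).
Proof.
move=> t x y t01; rewrite (_ : - _ = t * - x + (1 - t) * - y); last by ring.
exact: f_convex.
Qed.

Lemma convexR_le_max x y z : x <= y <= z -> f y <= Num.max (f x) (f z).
Proof.
move=> /andP[xy yz]; have [exz|xz] := eqVneq x z.
  have -> : y = x by apply/eqP; rewrite eq_le xy exz yz.
  by rewrite -exz maxxx.
have zx0 : 0 < z - x by rewrite subr_gt0 lt_neqAle xz (le_trans xy yz).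
pose t := (z - y) / (z - x).
have t01 : 0 <= t <= 1.
  by rewrite divr_ge0 ?(ltW zx0) ?subr_ge0 // ler_pdivrMr // mul1r lerD2l lerN2.
have ey : y = t * x + (1 - t) * z by rewrite /t; field; rewrite gt_eqF.
rewrite [in f y]ey; apply: (le_trans (f_convex _ _ t01)); case/andP: t01 => t0 t1.
have : f x <= Num.max (f x) (f z) by rewrite le_max lexx.
have : f z <= Num.max (f x) (f z) by rewrite le_max lexx orbT.
nra.
Qed.

Lemma convexR_sub_le x e t : 0 <= t <= 1 ->
  f (x + t * e) - f x <= t * (f (x + e) - f x).
Proof.
move=> t01; have := f_convex (x + e) x t01.
by rewrite (_ : _ + _ = x + t * e); [lra | ring].
Qed.

Lemma convexR_dist_le x e t : 0 <= t <= 1 ->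
  `|f (x + t * e) - f x| <= t * (`|f (x + e) - f x| + `|f (x - e) - f x|).
Proof.
move=> t01; have /andP[t0 t1] := t01.
have up := convexR_sub_le x e t01.
have lo := convexR_sub_le x (- e) t01; rewrite mulrN in lo.
have mid : f x <= 2^-1 * f (x + t * e) + (1 - 2^-1) * f (x - t * e).
  have half : 0 <= (2^-1 : R) <= 1 by apply/andP; split; lra.
  by have := f_convex (x + t * e) (x - t * e) half; rewrite (_ : _ + _ = x) //; field.
have := ler_wpM2l t0 (ler_norm (f (x + e) - f x)).
have := ler_wpM2l t0 (ler_norm (f (x - e) - f x)).
have := mulr_ge0 t0 (normr_ge0 (f (x + e) - f x)).
have := mulr_ge0 t0 (normr_ge0 (f (x - e) - f x)).
rewrite ler_norml mulrDr => *; apply/andP; split; lra.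
Qed.

Lemma convexR_local_lipschitz x y : `|y - x| <= 1 ->
  `|f y - f x| <= `|y - x| * (`|f (x + 1) - f x| + `|f (x - 1) - f x|).
Proof.
have -> : f y = f (x + (y - x)) by rewrite addrC subrK.
move: (y - x) => u.
rewrite ler_norml => /andP[u_ge u_le].
have [u0|u0] := leP 0 u.
  have u01 : 0 <= u <= 1 by rewrite u0 u_le.
  by rewrite (ger0_norm u0); have := convexR_dist_le x 1 u01; rewrite mulr1.
have u01 : 0 <= - u <= 1 by rewrite oppr_ge0 ltW // lerNl.
rewrite (ltr0_norm u0) [X in _ * X]addrC.
by have := convexR_dist_le x (-1) u01; rewrite mulrN1 !opprK.
Qed.

Lemma convexR_continuous : continuous f.
Proof.
move=> x; pose K := `|f (x + 1) - f x| + `|f (x - 1) - f x|.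
have K1 : 0 < K + 1 by rewrite ltr_wpDl // addr_ge0.
apply/cvgrPdist_le => eps eps0; apply/nbhs_ballP.
exists (Num.min 1 (eps / (K + 1))) => /=; first by rewrite lt_min ltr01 divr_gt0.
move=> y; rewrite /ball /= distrC lt_min => /andP[yx1 yxK].
rewrite distrC; apply: (le_trans (convexR_local_lipschitz (ltW yx1))).
rewrite ltr_pdivlMr // in yxK; have := normr_ge0 (y - x); rewrite -/K; nra.
Qed.
End convexR.

(* The affine function is x - sup {x >= x0 | f x < 0}, or -1 if f < 0 on [x0, +oo). *)
Lemma convexR_affine_sign (R : realType) (f : R -> R) (x0 x1 : R) :
    convexR f -> x0 < x1 -> f x0 < 0 -> f x1 < 0 ->
  exists a b : R,
    [/\ 0 <= b, a + b * x0 < 0 & forall x, x0 <= x -> 0 <= f x * (a + b * x)].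
Proof.
move=> f_convex x01 fx0 fx1.
have neg_between x y : x0 <= x <= y -> f y < 0 -> f x < 0.
  move=> xy fy; apply: le_lt_trans (convexR_le_max f_convex xy) _.
  by rewrite gt_max fx0.
have [[z x0z fz]|f_neg] := pselect (exists2 z, x0 <= z & 0 <= f z); last first.
  exists (-1), 0; rewrite mul0r addr0; split => // x x0x.
  rewrite mul0r addr0 mulrN1 oppr_ge0 leNgt; apply/negP => fx; apply: f_neg; exists x => //.
  exact: ltW.
pose S := [set x | x0 <= x /\ f x < 0].
have S_z : ubound S z.
  move=> x [x0x fx]; rewrite leNgt; apply/negP => zx.
  by have := neg_between z x; rewrite x0z ltW // => /(_ isT fx); rewrite ltNge fz.
have S_sup : has_sup S by split; [exists x0 | exists z].
have x1_sup : x1 <= sup S by apply: sup_upper_bound => //; split => //; exact: ltW.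
exists (- sup S), 1; rewrite mul1r; split => // [|x x0x].
  by rewrite addrC subr_lt0 (lt_le_trans x01).
rewrite mul1r addrC.
have [fx|fx] := ltP (f x) 0.
  by rewrite mulr_le0 ?subr_le0 ?(ltW fx) // sup_upper_bound.
have [sx|xs] := leP (sup S) x; first by rewrite mulr_ge0 ?subr_ge0.
have [e [_ fe] xe] : exists2 e, S e & sup S - (sup S - x) < e.
  by apply: sup_adherent; rewrite ?subr_gt0.
rewrite opprB addrC subrK in xe.
by have := neg_between x e; rewrite x0x ltW // => /(_ isT fe); rewrite ltNge fx.
Qed.

Lemma convexR_quadratic_sign (R : realType) (f : R -> R) :
  convexR f -> (exists x, f x != 0) ->
  exists a b c x0 : R, (forall x, 0 <= f x * (a + b * x + c * x ^+ 2)) /\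
    0 < f x0 * (a + b * x0 + c * x0 ^+ 2).
Proof.
move=> f_convex [x1 fx1].
have [[x0 fx0]|no_neg] := pselect (exists x0, f x0 < 0); last first.
  have f_ge0 x : 0 <= f x by rewrite leNgt; apply/negP => fx; apply: no_neg; exists x.
  exists 1, 0, 0, x1; split => [x|]; rewrite !mul0r !addr0 mulr1 //.
  by rewrite lt_neqAle eq_sym fx1 f_ge0.
have [r r0 f_neg] : exists2 r, 0 < r & forall x, `|x - x0| < r -> f x < 0.
  have : \forall t \near x0, f t < 0.
    exact: cvgr_lt (f x0) (convexR_continuous f_convex (x := x0)) 0 fx0.
  case/nbhs_ballP => r r0 near_x0.
  by exists r => // x xr; apply: near_x0; rewrite /ball /= distrC.
have r2 : 0 < r / 2 by rewrite divr_gt0.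
have r2r : `|r / 2| < r by rewrite gtr0_norm // ltr_pdivrMr // ltr_pMr // ltr1n.
have [aR [bR [bR0 aR0 signR]]] : exists aR bR : R, [/\ 0 <= bR, aR + bR * x0 < 0 &
    forall x, x0 <= x -> 0 <= f x * (aR + bR * x)].
  apply: (convexR_affine_sign (x1 := x0 + r / 2) f_convex) => //.
    by rewrite ltrDl.
  by apply: f_neg; rewrite addrC addKr.
have [aL [bL [bL0 aL0 signL]]] : exists aL bL : R, [/\ 0 <= bL, aL + bL * - x0 < 0 &
    forall x, - x0 <= x -> 0 <= f (- x) * (aL + bL * x)].
  apply: (convexR_affine_sign (x1 := - x0 + r / 2) (convexR_opp f_convex)).
  - by rewrite ltrDl.
  - by rewrite opprK.
  by apply: f_neg; rewrite opprD opprK addrAC subrr add0r normrN.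
(* q x = - (aL - bL x) (aR + bR x); each factor is <= 0 beyond x0 on its side and < 0 at x0. *)
exists (- (aL * aR)), (bL * aR - aL * bR), (bL * bR), x0.
have qE x : - (aL * aR) + (bL * aR - aL * bR) * x + bL * bR * x ^+ 2 =
    - ((aL + bL * - x) * (aR + bR * x)) by ring.
split => [x|]; rewrite qE; last by rewrite mulrN oppr_gt0 nmulr_rlt0 // nmulr_rgt0.
have [x0x|xx0] := leP x0 x.
  have L_le0 : aL + bL * - x <= 0 by rewrite (le_trans _ (ltW aL0)) // lerD2l ler_wpM2l // lerN2.
  by have := signR x x0x; nra.
have R_le0 : aR + bR * x <= 0 by rewrite (le_trans _ (ltW aR0)) // lerD2l ler_wpM2l // ltW.
by have := signL (- x); rewrite opprK lerN2 => /(_ (ltW xx0)); nra.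
Qed.

Section hermite_small_degrees.
Variable R : realType.

Let gauss (x : R) := expR (- (x ^+ 2) / 2).

Let is_derive_gauss (x : R) : is_derive x 1 gauss (gauss x * - x).
Proof.
have quad_deriv : is_derive x 1 (fun y : R => - (y ^+ 2) / 2) (- x).
  have -> : (fun y : R => - (y ^+ 2) / 2) = 2^-1 *: - (@id R ^+ 2).
    by apply/funext => y; rewrite !fctE mulrC.
  apply: is_derive_eq.
  by rewrite expr1 /GRing.scale /= mulr1 mulrN mulrA mulVf ?mul1r.
exact: is_derive1_comp.
Qed.

Let derive1_gauss : derive1 gauss = fun x => gauss x * - x.
Proof. by apply/funext => x; rewrite derive1E; have [_ ->] := is_derive_gauss x. Qed.

Let expR_mul_gauss (x : R) : expR (x ^+ 2 / 2) * gauss x = 1.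
Proof. by rewrite -expRD mulNr addrN expR0. Qed.

Lemma hermite0 (x : R) : hermite 0 x = 1.
Proof. by rewrite /hermite /= expr0 mul1r expR_mul_gauss. Qed.

Lemma hermite1 (x : R) : hermite 1 x = x.
Proof.
by rewrite /hermite /= derive1_gauss expr1 mulrA mulN1r mulNr expR_mul_gauss mulN1r opprK.
Qed.

Lemma hermite2 (x : R) : hermite 2 x = x ^+ 2 - 1.
Proof.
rewrite /hermite /= derive1_gauss sqrrN expr1n mul1r derive1E.
have -> : (fun y => gauss y * - y) = gauss * -%R by [].
have [_ ->] : is_derive x 1 (gauss * -%R) (gauss x * -1 + - x * (gauss x * - x)).
  exact: is_deriveM (is_derive_gauss x) (is_deriveNid x 1).
rewrite (_ : _ + _ = gauss x * (x ^+ 2 - 1)); last by ring.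
by rewrite mulrA expR_mul_gauss mul1r.
Qed.

End hermite_small_degrees.


Section standard_normal_integrals.
Variable R : realType.
Local Notation mu := (@lebesgue_measure R).

Lemma ge0_integral_Phi (h : R -> \bar R) : measurable_fun [set: R] h ->
    (forall x, 0 <= h x)%E ->
  (\int[Phi R]_x h x = \int[mu]_x (h x * (normal_pdf 0 1 x)%:E))%E.
Proof.
move=> mh h0; rewrite /Phi.
rewrite -(Radon_Nikodym_SigmaFinite.change_of_variables (normal_prob_dominates 0 1)) //.
have RN_int := Radon_Nikodym_SigmaFinite.f_integrable (normal_prob_dominates (0 : R) 1).
apply: ae_eq_integral => //.
- by apply: emeasurable_funM => //; exact: measurable_int RN_int.
- by apply: emeasurable_funM => //; apply/measurable_EFinP; exact: measurable_normal_pdf.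
apply/ae_eqe_mul2l/ae_eq_sym/integral_ae_eq => //.
- exact: integrable_normal_pdf.
- exact: measurable_int RN_int.
- move=> E _ mE.
  by rewrite -Radon_Nikodym_SigmaFinite.f_integral //; exact: normal_prob_dominates.
Qed.

Lemma normal_pdf01_ge (M x : R) : `|x| <= M ->
  normal_peak 1 * expR (- (M ^+ 2) / 2) <= normal_pdf 0 1 x.
Proof.
move=> xM; rewrite /normal_pdf oner_eq0 /normal_fun subr0 expr1n.
rewrite ler_wpM2l ?normal_peak_ge0 // ler_expR !mulNr lerN2 ler_pM2r //.
rewrite -[x ^+ 2]real_normK ?num_real // lerXn2r ?nnegrE //.
exact: le_trans (normr_ge0 x) xM.
Qed.

Lemma sqr_mul_expRN_le (x : R) : x ^+ 2 * expR (- (x ^+ 2 / 8)) <= 8.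
Proof.
have x2_ge0 : 0 <= x ^+ 2 := sqr_ge0 x.
have := expR_ge1Dx (x ^+ 2 / 8); have := expR_gt0 (- (x ^+ 2 / 8)).
have := expRxMexpNx_1 (x ^+ 2 / 8); nra.
Qed.

(* x^4 e^(-x^2/2) = (x^2 e^(-x^2/8))^2 e^(-x^2/4) <= 64 e^(-x^2/4) *)
Lemma exprn4_normal_pdf_le (x : R) : x ^+ 4 * normal_pdf 0 1 x <=
  (64 * normal_peak 1 / normal_peak (Num.sqrt 2)) * normal_pdf 0 (Num.sqrt 2) x.
Proof.
have s0 : Num.sqrt 2 != 0 :> R by rewrite sqrtr_eq0 -ltNge ltr0n.
rewrite /normal_pdf oner_eq0 (negbTE s0) /normal_fun subr0 expr1n sqr_sqrtr ?ler0n //.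
set u := expR (- (x ^+ 2 / 8)).
have -> : expR (- x ^+ 2 / (1 *+ 2)) = u ^+ 4.
  by rewrite /u -expRM_natl; congr expR; field.
have -> : expR (- x ^+ 2 / (2 *+ 2)) = u ^+ 2.
  by rewrite /u -expRM_natl; congr expR; rewrite -mulr_natr; field.
have peak_sqrt2 : 0 < normal_peak (Num.sqrt 2 : R) by exact: normal_peak_gt0.
rewrite (_ : _ * (normal_peak (Num.sqrt 2) * u ^+ 2) = 64 * normal_peak 1 * u ^+ 2);
  last by field; rewrite gt_eqF.
rewrite (_ : x ^+ 4 * _ = (x ^+ 2 * u) ^+ 2 * (normal_peak 1 * u ^+ 2)); last by ring.
rewrite -mulrA ler_wpM2r ?mulr_ge0 ?normal_peak_ge0 ?exprn_ge0 ?expR_ge0 //.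
have := sqr_mul_expRN_le x; have := mulr_ge0 (sqr_ge0 x) (expR_ge0 (- (x ^+ 2 / 8))).
rewrite -/u; nra.
Qed.

Lemma ge0_lty_integrable_Phi (h : R -> R) : measurable_fun [set: R] h ->
    (forall x, 0 <= h x) -> (\int[Phi R]_x (h x)%:E < +oo)%E ->
  (Phi R).-integrable [set: R] (fun x => (h x)%:E).
Proof.
move=> mh h0 fin; apply/integrableP; split; first exact/measurable_EFinP.
by under eq_integral => x _ do rewrite gee0_abs ?lee_fin //.
Qed.

Lemma integrable_Phi_exprn4 : (Phi R).-integrable [set: R] (fun x => (x ^+ 4)%:E).
Proof.
have x4_ge0 (x : R) : 0 <= x ^+ 4 by rewrite exprn_even_ge0.
have m4 : measurable_fun [set: R] (fun x : R => (x ^+ 4)%:E).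
  by apply/measurable_EFinP; exact: exprn_measurable.
suff fin : (\int[Phi R]_x (x ^+ 4)%:E < +oo)%E.
  exact: ge0_lty_integrable_Phi (exprn_measurable _) x4_ge0 fin.
rewrite ge0_integral_Phi //.
pose C : R := 64 * normal_peak 1 / normal_peak (Num.sqrt 2).
have C0 : 0 <= C by rewrite /C !mulr_ge0 ?invr_ge0 ?normal_peak_ge0.
have m_pdf2 := measurable_normal_pdf (0 : R) (Num.sqrt 2).
apply: (@le_lt_trans _ _ (\int[mu]_x (C%:E * (normal_pdf 0 (Num.sqrt 2) x)%:E))%E).
  apply: ge0_le_integral => //.
  - by move=> x _; rewrite -EFinM lee_fin mulr_ge0 ?normal_pdf_ge0.
  - by apply: emeasurable_funM => //; apply/measurable_EFinP; exact: measurable_normal_pdf.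
  - by apply: measurable_funeM; exact/measurable_EFinP.
  - by move=> x _; rewrite -!EFinM lee_fin; exact: exprn4_normal_pdf_le.
rewrite ge0_integralZl //; first by rewrite integral_normal_pdf mule1 ltry.
- exact/measurable_EFinP.
- by move=> x _; rewrite lee_fin normal_pdf_ge0.
Qed.

Lemma integrable_Phi_L2_mul (f p : R -> R) : in_L2_Phi f -> measurable_fun [set: R] p ->
    (forall x, `|p x| <= 1 + x ^+ 2) ->
  (Phi R).-integrable [set: R] (fun x => (f x * p x)%:E).
Proof.
(* |f p| <= |f| (1 + x^2) <= f^2 + 1 + x^4 *)
move=> [mf f2_lty] mp p_le.
have int_f2 : (Phi R).-integrable [set: R] (fun x => (f x ^+ 2)%:E).
  by apply: ge0_lty_integrable_Phi => // [|x]; [exact: measurable_funX | exact: sqr_ge0].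
have int_1 : (Phi R).-integrable [set: R] (fun x => 1%:E).
  exact: finite_measure_integrable_cst.
have int_dom := integrableD measurableT (integrableD measurableT int_f2 int_1)
  integrable_Phi_exprn4.
apply: (le_integrable measurableT _ _ int_dom); first by apply/measurable_EFinP; exact: measurable_funM.
move=> x _ /=; rewrite lee_fin normrM.
rewrite [X in _ <= X]ger0_norm ?addr_ge0 ?sqr_ge0 ?exprn_even_ge0 //.
have fx2 : f x ^+ 2 = `|f x| ^+ 2 by rewrite real_normK ?num_real.
have x4 : x ^+ 4 = (x ^+ 2) ^+ 2 by rewrite -exprM.
rewrite fx2 x4; have := ler_wpM2l (normr_ge0 (f x)) (p_le x).
have := sqr_ge0 (`|f x| - (1 + x ^+ 2)); have := sqr_ge0 (x ^+ 2 - 1).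
have := sqr_ge0 x; nra.
Qed.

Lemma integral_Phi_gt0_itv (g : R -> R) (x0 d e : R) : measurable_fun [set: R] g ->
    0 < d -> 0 < e -> (forall x, 0 <= g x) -> (forall x, `|x - x0| <= d -> e <= g x) ->
  (0 < \int[Phi R]_x (g x)%:E)%E.
Proof.
move=> mg d0 e0 g_ge0 g_ge.
rewrite ge0_integral_Phi //; last by apply/measurable_EFinP.
pose I := `[x0 - d, x0 + d]%classic.
have mI : measurable I by exact: measurable_itv.
pose m := normal_peak 1 * expR (- ((`|x0| + d) ^+ 2) / 2).
have m0 : 0 < m by rewrite mulr_gt0 ?expR_gt0 ?normal_peak_gt0 ?oner_eq0.
have em0 : 0 < e * m by rewrite mulr_gt0.
apply: (@lt_le_trans _ _ (\int[mu]_x ((e * m)%:E * (\1_I x)%:E))%E).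
  rewrite ge0_integralZl ?lee_fin ?(ltW em0) //; last first.
    by apply/measurable_EFinP; exact: measurable_indic.
  have dd : x0 - d < x0 + d by lra.
  have := lebesgue_measure_itv `[x0 - d, x0 + d]; rewrite /= lte_fin dd => muI.
  rewrite integral_indic // setIT [X in (_ * X)%E]muI.
  by rewrite -EFinD -EFinM lte_fin mulr_gt0 // subr_gt0.
apply: ge0_le_integral => //.
- by move=> x _; rewrite -EFinM lee_fin mulr_ge0 ?(ltW em0) // indicE ler0n.
- by apply: measurable_funeM; apply/measurable_EFinP; exact: measurable_indic.
- apply: emeasurable_funM => //; apply/measurable_EFinP => //.
  exact: measurable_normal_pdf.
move=> x _; rewrite -!EFinM lee_fin indicE.
have [xI|] := boolP (x \in I); last by rewrite mulr0 mulr_ge0 ?normal_pdf_ge0.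
have xx0 : `|x - x0| <= d by move: xI; rewrite inE /I /= in_itv /= ler_distl.
rewrite mulr1 ler_pM ?(ltW m0) ?(ltW e0) ?g_ge //.
apply: normal_pdf01_ge; rewrite -[x](subrK x0) (le_trans (ler_normD _ _)) //.
by rewrite addrC lerD2l.
Qed.

Lemma integral_Phi_gt0 (g : R -> R) (x0 : R) : continuous g ->
  (forall x, 0 <= g x) -> 0 < g x0 -> (0 < \int[Phi R]_x (g x)%:E)%E.
Proof.
move=> g_cont g_ge0 gx0; have gx0_half : 0 < g x0 / 2 by rewrite divr_gt0.
have half_lt (y : R) : 0 < y -> y / 2 < y by move=> y0; rewrite ltr_pdivrMr // ltr_pMr // ltr1n.
have : \forall x \near x0, g x0 / 2 < g x by exact: cvgr_gt (g x0) (g_cont x0) _ (half_lt _ gx0).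
case/nbhs_ballP => r r0 near_x0.
apply: (@integral_Phi_gt0_itv _ x0 (r / 2) (g x0 / 2)) => //.
- exact: continuous_measurable_fun.
- by rewrite divr_gt0.
move=> x xr; apply/ltW/near_x0; rewrite /ball /= distrC (le_lt_trans xr) //.
exact: half_lt.
Qed.

Lemma integral_Phi_mul_quadratic (f : R -> R) (a b c : R) : in_L2_Phi f ->
  (\int[Phi R]_x (f x * (a + b * x + c * x ^+ 2))%:E =
     (a + c)%:E * \int[Phi R]_x (f x * hermite 0 x)%:E
   + b%:E * \int[Phi R]_x (f x * hermite 1 x)%:E
   + c%:E * \int[Phi R]_x (f x * hermite 2 x)%:E)%E.
Proof.
move=> f_L2.
have -> : @hermite R 0 = fun=> 1 by apply/funext => x; rewrite hermite0.
have -> : @hermite R 1 = id by apply/funext => x; rewrite hermite1.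
have -> : @hermite R 2 = fun x => x ^+ 2 - 1 by apply/funext => x; rewrite hermite2.
have int0 : (Phi R).-integrable [set: R] (fun x => (f x * 1)%:E).
  by apply: integrable_Phi_L2_mul => // x; rewrite normr1 lerDl sqr_ge0.
have int1 : (Phi R).-integrable [set: R] (fun x => (f x * x)%:E).
  apply: integrable_Phi_L2_mul => // x; have := sqr_ge0 (x - 1).
  by have := sqr_ge0 (x + 1); rewrite ler_norml => *; apply/andP; split; nra.
have int2 : (Phi R).-integrable [set: R] (fun x => (f x * (x ^+ 2 - 1))%:E).
  apply: integrable_Phi_L2_mul => // [|x]; first exact: measurable_funB.
  by have := sqr_ge0 x; rewrite ler_norml => *; apply/andP; split; lra.
transitivity (\int[Phi R]_x ((a + c)%:E * (f x * 1)%:E + b%:E * (f x * x)%:E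
                            + c%:E * (f x * (x ^+ 2 - 1))%:E))%E.
  by apply: eq_integral => x _; rewrite -!EFinM -!EFinD; congr EFin; ring.
have := integrableZl measurableT (a + c) int0.
have := integrableZl measurableT b int1.
have := integrableZl measurableT c int2.
move=> iZ2 iZ1 iZ0.
rewrite !integralD ?integralZl //; exact: integrableD.
Qed.

End standard_normal_integrals.

Lemma gt0_lincomb3_neq0 (R : realDomainType) (a b c : R) (u v w : \bar R) :
  (0 < a%:E * u + b%:E * v + c%:E * w)%E -> u != 0 \/ v != 0 \/ w != 0.
Proof.
have [->|] := eqVneq u 0; last by left.
have [->|] := eqVneq v 0; last by right; left.
have [->|] := eqVneq w 0; last by right; right.
by rewrite !mule0 !adde0 ltxx.
Qed.

Theorem lemma2 (R : realType) (f : R -> R) :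
  in_L2_Phi f ->
  convex_function [set: R] f ->
  (exists x : R, f x != 0) ->
  (\int[Phi R]_x (f x * hermite 0 x)%:E != 0)%E \/
  (\int[Phi R]_x (f x * hermite 1 x)%:E != 0)%E \/
  (\int[Phi R]_x (f x * hermite 2 x)%:E != 0)%E.
Proof.
move=> f_L2 /convex_functionT_convexR f_convex f_neq0.
have [a [b [c [x0 [fq_ge0 fq_gt0]]]]] := convexR_quadratic_sign f_convex f_neq0.
have fq_cont : continuous (fun x => f x * (a + b * x + c * x ^+ 2)).
  have -> : (fun x => f x * (a + b * x + c * x ^+ 2)) =
      f \* horner (a%:P + b *: 'X + c *: 'X^2).
    by apply/funext => x; rewrite /= !hornerE.
  by move=> x; apply: continuousM; [exact: convexR_continuous | exact: continuous_horner].
have := integral_Phi_gt0 fq_cont fq_ge0 fq_gt0.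
rewrite integral_Phi_mul_quadratic //.
exact: gt0_lincomb3_neq0.
Qed.
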